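(* Let $t$ be a table with $n$ rows, and fix a predicate such that exactly $pn$ rows of $t$ satisfy it, where $p\in(0,1]$. Draw a sample of $k\ge1$ rows from $t$ uniformly at random with replacement (i.e., $k$ i.i.d. uniform draws), let $\hat X$ be the number of sampled rows satisfying the predicate, and estimate the cardinality by $\mathrm{est}=\frac{n}{k}\hat X$, the true cardinality being $\mathrm{true}=pn$. Let $\sigma^2=p(1-p)$. Then for every $q\ge1$, $$\mathbb{P}(\text{Q-error}\le q)\ \ge\ 1-\Omega-\Psi,$$ where $$\Omega=\min\Bigg(\Big(\frac{e^{q-1}}{q^{q}}\Big)^{pk},\ \exp\Big(-\frac{k(pq-p)^2}{2\sigma^2+2(pq-p)/3}\Big),\ \exp\big(-2p^2(q-1)^2k\big)\Bigg),$$ and, when $pq>1$, $$\Psi=\min\Bigg(\Big(e^{\frac1q-1}q^{\frac1q}\Big)^{pk},\ \exp\Big(-\frac{k(p-p/q)^2}{2\sigma^2+2(p-p/q)/3}\Big),\ \exp\Big(-\frac{2k(pq-1)^2}{q^2}\Big)\Bigg),$$ while, when $pq\le1$, $$\Psi=\min\Bigg(\Big(e^{\frac1q-1}q^{\frac1q}\Big)^{pk},\ \exp\Big(-\frac{k(p-p/q)^2}{2\sigma^2+2(p-p/q)/3}\Big)\Bigg).$$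
   Context: The Q-error of an estimate is $\max\big(\frac{\mathrm{true}'}{\mathrm{est}'},\frac{\mathrm{est}'}{\mathrm{true}'}\big)$, where $\mathrm{est}'=\max(\mathrm{est},1)$ and $\mathrm{true}'=\max(\mathrm{true},1)$ (to avoid division by zero). $\Omega$ bounds the probability of over-estimation ($\mathrm{est}\ge q\cdot\mathrm{true}$) and $\Psi$ the probability of under-estimation ($\mathrm{est}\le \mathrm{true}/q$). *)

From HB Require Import structures.
From mathcomp Require Import all_boot all_order all_algebra.
From mathcomp Require Import all_classical all_reals.
From mathcomp Require Import sequences exp.
Set Implicit Arguments. Unset Strict Implicit. Unset Printing Implicit Defensive.
Import Order.TTheory GRing.Theory Num.Theory.
Local Open Scope ring_scope.

Section Defs.
Variable R : realType.

Definition qerror (est tru : R) : R :=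
  let est' := Num.max est 1 in
  let tru' := Num.max tru 1 in
  Num.max (tru' / est') (est' / tru').

(* Uniform probability of an event on the sample space of k i.i.d. uniform
   draws of row indices from a table with n rows: a sample is a function
   'I_k -> 'I_n, and all n^k samples are equally likely. *)
Definition sample_prob (n k : nat) (E : pred {ffun 'I_k -> 'I_n}) : R :=
  #|[set s | E s]|%:R / (n ^ k)%:R.

Definition Xhat (T : Type) (n k : nat) (t : 'I_n -> T) (P : pred T)
  (s : {ffun 'I_k -> 'I_n}) : nat :=
  #|[set i : 'I_k | P (t (s i))]|.

Definition estimate (T : Type) (n k : nat) (t : 'I_n -> T) (P : pred T)
  (s : {ffun 'I_k -> 'I_n}) : R :=
  n%:R / k%:R * (Xhat t P s)%:R.

Definition sigma2 (p : R) : R := p * (1 - p).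

Definition Omega (p q : R) (k : nat) : R :=
  Num.min ((expR (q - 1) / q `^ q) `^ (p * k%:R))
   (Num.min (expR (- (k%:R * (p * q - p) ^+ 2)
                     / (2 * sigma2 p + 2 * (p * q - p) / 3)))
            (expR (- (2 * p ^+ 2 * (q - 1) ^+ 2 * k%:R)))).

Definition Psi (p q : R) (k : nat) : R :=
  let a := (expR (q^-1 - 1) * q `^ (q^-1)) `^ (p * k%:R) in
  let b := expR (- (k%:R * (p - p / q) ^+ 2)
                  / (2 * sigma2 p + 2 * (p - p / q) / 3)) in
  if 1 < p * q then
    Num.min a (Num.min b (expR (- (2 * k%:R * (p * q - 1) ^+ 2) / q ^+ 2)))
  else Num.min a b.

End Defs.

From mathcomp Require Import all_boot all_order all_algebra.
From mathcomp Require Import all_classical all_reals.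
From mathcomp Require Import sequences exp.
From mathcomp Require Import topology normedtype derive realfun.
From mathcomp Require Import ring lra.
Set Implicit Arguments.
Unset Strict Implicit.
Unset Printing Implicit Defensive.
Import Order.TTheory GRing.Theory Num.Theory.
Import numFieldNormedType.Exports.
Local Open Scope ring_scope.

(* The number of sampled rows satisfying the predicate is a sum of k independent
   Bernoulli(p) indicators Y_i, and a Q-error above q forces one of the tails
   sum_i (Y_i - p) >= k (p q - p)  or  sum_i (p - Y_i) >= k (p - p / q).
   Exponential Markov on the product space of samples bounds the upper tail by
   (M(l) e^(-l d))^k for every l >= 0, where M(l) = p e^(l (1 - p)) + (1 - p) e^(-l p)
   is the moment generating function of Y - p; the lower tail is the upper tail of
   the complementary predicate, of success probability 1 - p.  The three terms of
   Omega and Psi come from three bounds on M: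
   - M(l) <= exp(p (e^l - 1) - l p), from 1 + x <= e^x, taken at l = ln q;
   - Bernstein's M(l) <= exp(sigma^2 l^2 / (2 (1 - l / 3))), from the exponential
     series and (i + 2)! >= 2 * 3^i, taken at l = d / (sigma^2 + d / 3);
   - Hoeffding's lemma M(l) <= exp(l^2 / 8), taken at l = 4 d. *)

Section exp_inequalities.
Variable R : realType.
Local Open Scope classical_set_scope.

Lemma ge0_is_derive_le (f df : R -> R) (a b : R) : a <= b ->
  (forall x : R, is_derive x 1 f (df x)) -> (forall x, a <= x <= b -> 0 <= df x) ->
  f a <= f b.
Proof.
move=> ab fdf df_ge0.
have cf : {within `[a, b], continuous f}.
  apply: derivable_within_continuous => x _.
  exact: (@ex_derive _ _ _ _ _ _ _ (fdf x)).
have [c cab fbaE] := MVT_segment ab (fun x _ => fdf x) cf.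
by rewrite -subr_ge0 fbaE mulr_ge0 ?subr_ge0 // df_ge0.
Qed.

Lemma geometric_sum_le (r : R) (M : nat) : 0 <= r < 1 ->
  \sum_(0 <= i < M) r ^+ i <= (1 - r)^-1.
Proof.
move=> /andP[r0 r1]; have r1' : 0 < 1 - r by rewrite subr_gt0.
have geoE : (\sum_(0 <= i < M) r ^+ i) * (1 - r) = 1 - r ^+ M.
  by rewrite big_mkord mulrC -opprB mulNr -subrX1 opprB.
rewrite -(ler_pM2r r1') mulVf ?gt_eqF // geoE gerBl exprn_ge0 //.
Qed.

Lemma fact_ge_2_3X (i : nat) : (2 * 3 ^ i <= i.+2`!)%N.
Proof.
elim: i => // i IH.
by rewrite factS expnS mulnCA leq_mul.
Qed.

Lemma exp_coeff_SS_le (x c : R) (i : nat) : `|x| <= c ->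
  x ^+ i.+2 / i.+2`!%:R <= x ^+ 2 / 2 * (c / 3) ^+ i.
Proof.
move=> xc; have c0 : 0 <= c := le_trans (normr_ge0 x) xc.
have x2 : 0 <= x ^+ 2 by rewrite sqr_ge0.
have powle : x ^+ i.+2 <= x ^+ 2 * c ^+ i.
  rewrite -addn2 exprD mulrC (le_trans (ler_norm _)) // normrM ger0_norm //.
  by rewrite ler_wpM2l // normrX lerXn2r // nnegrE.
have factle : (2 * 3 ^+ i : R) <= i.+2`!%:R.
  by have := fact_ge_2_3X i; rewrite -(ler_nat R) natrM natrX.
have den_gt0 : (0 : R) < 2 * 3 ^+ i by rewrite mulr_gt0 ?exprn_gt0.
apply: (le_trans (ler_wpM2r _ powle)); first by rewrite invr_ge0.
apply: (@le_trans _ _ (x ^+ 2 * c ^+ i / (2 * 3 ^+ i))).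
  apply: ler_wpM2l; first by rewrite mulr_ge0 // exprn_ge0.
  by rewrite lef_pV2 ?posrE ?ltr0n ?fact_gt0.
by rewrite expr_div_n invfM mulrACA.
Qed.

Lemma expR_le_bernstein (x c : R) : `|x| <= c -> c < 3 ->
  expR x <= 1 + x + x ^+ 2 / (2 * (1 - c / 3)).
Proof.
move=> xc c3; have c0 : 0 <= c := le_trans (normr_ge0 x) xc.
have r01 : 0 <= c / 3 < 1 by rewrite divr_ge0 //= ltr_pdivrMr // mul1r.
apply: limr_le; first exact: is_cvg_series_exp_coeff.
exists 2%N => // -[|[|M]] // _.
rewrite /series /= big_nat_recl // big_nat_recl // /exp_coeff /=.
rewrite expr0 expr1 divr1 invr1 mulr1 addrA lerD2l invfM mulrA.
apply: (@le_trans _ _ (\sum_(0 <= i < M) x ^+ 2 / 2 * (c / 3) ^+ i)).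
  by apply: ler_sum => i _; exact: exp_coeff_SS_le.
rewrite -mulr_sumr ler_wpM2l ?geometric_sum_le //.
by rewrite divr_ge0 ?sqr_ge0.
Qed.

End exp_inequalities.

Section bernoulli_mgf.
Variable R : realType.
Implicit Types p l q t : R.

Definition bernoulli_mgf p l :=
  p * expR (l * (1 - p)) + (1 - p) * expR (- (l * p)).

Lemma bernoulli_mgf_ge0 p l : 0 <= p <= 1 -> 0 <= bernoulli_mgf p l.
Proof.
by case/andP=> p0 p1; rewrite addr_ge0 // mulr_ge0 ?expR_ge0 ?subr_ge0.
Qed.

Lemma bernoulli_mgfC p l : bernoulli_mgf (1 - p) l = bernoulli_mgf p (- l).
Proof.
rewrite /bernoulli_mgf (_ : 1 - (1 - p) = p); last by ring.
by rewrite !mulNr opprK addrC.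
Qed.

Lemma bernoulli_mgf_chernoff p l :
  bernoulli_mgf p l <= expR (p * (expR l - 1) - l * p).
Proof.
have -> : bernoulli_mgf p l = (1 + p * (expR l - 1)) * expR (- (l * p)).
  by rewrite /bernoulli_mgf mulrBr mulr1 expRD; ring.
by rewrite expRD ler_wpM2r ?expR_ge0 ?expR_ge1Dx.
Qed.

Lemma bernoulli_mgf_bernstein p l : 0 <= p <= 1 -> 0 <= l < 3 ->
  bernoulli_mgf p l <= expR (sigma2 p * (l ^+ 2 / (2 * (1 - l / 3)))).
Proof.
move=> /andP[p0 p1] /andP[l0 l3].
set C := l ^+ 2 / _.
have expR_le z : -1 <= z <= 1 -> expR (l * z) <= 1 + l * z + z ^+ 2 * C.
  move=> z1; apply: le_trans (@expR_le_bernstein _ (l * z) l _ l3) _.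
    by rewrite normrM ger0_norm // ler_piMr // ler_norml.
  by rewrite exprMn [l ^+ 2 * _]mulrC -mulrA.
apply: le_trans (expR_ge1Dx _).
have /expR_le up : -1 <= 1 - p <= 1 by lra.
have /expR_le lo : -1 <= - p <= 1 by lra.
rewrite /bernoulli_mgf /sigma2 -mulrN.
have subp_ge0 : 0 <= 1 - p by rewrite subr_ge0.
have := ler_wpM2l p0 up; have := ler_wpM2l subp_ge0 lo.
rewrite sqrrN; nra.
Qed.

(* Hoeffding's lemma: with A x = E[exp (x Y)], both ln (A x) and x^2/8 + p x
   vanish at 0, and the derivative of the former is at most that of the latter. *)
Section hoeffding.
Variable p : R.
Hypothesis p01 : 0 <= p <= 1.

Let A (x : R) := 1 - p + p * expR x.

Let A_gt0 x : 0 < A x.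
Proof.
case/andP: p01 => p0 p1; rewrite /A.
have [->|pn0] := eqVneq p 0; first by rewrite subr0 mul0r addr0.
by rewrite ltr_wpDl ?subr_ge0 // mulr_gt0 ?expR_gt0 // lt_def pn0.
Qed.

Let is_derive_A (x : R) : is_derive x 1 A (p * expR x).
Proof.
apply: is_derive_eq
  (is_deriveD (is_derive_cst (1 - p) x 1) (is_deriveZ p (is_derive_expR x))) _.
by rewrite add0r.
Qed.

Let deriv_ln_A_le x : 0 <= x -> (A x)^-1 * (p * expR x) <= p + x / 4.
Proof.
move=> x0; have Ax := A_gt0 x.
rewrite (_ : (A x)^-1 * _ = 1 - (1 - p) / A x); last first.
  by rewrite /A in Ax *; field; rewrite gt_eqF.
pose f := 4^-1 *: id + (1 - p) *: (fun y => (A y)^-1).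
pose df y := 4^-1 * 1 + (1 - p) * (- (A y) ^- 2 * (p * expR y)).
have fE y : f y = 4^-1 * y + (1 - p) / A y by [].
have f0 : f 0 = 1 - p.
  by rewrite fE /A expR0 mulr1 subrK invr1 mulr1 mulr0 add0r.
have fdf (y : R) : is_derive y 1 f (df y).
  exact: is_deriveD (is_deriveZ _ (@is_derive_id _ _ y 1))
    (is_deriveZ _ (is_deriveV (lt0r_neq0 (A_gt0 y)) (is_derive_A y))).
suff : f 0 <= f x by rewrite f0 fE; lra.
apply: (ge0_is_derive_le x0 fdf) => y _.
have Ay := A_gt0 y; case/andP: p01 => p0 p1.
rewrite /df mulr1 mulNr mulrN subr_ge0 mulrCA mulrC ler_pdivrMr ?exprn_gt0 //.
(* AM-GM: 4ab <= (a + b)^2 with a = 1 - p and b = p e^y, whose sum is A y. *)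
have : 0 <= p * expR y by rewrite mulr_ge0 ?expR_ge0.
rewrite /A; move: (p * expR y) => b b0.
have := sqr_ge0 (1 - p - b); rewrite !expr2; nra.
Qed.

Let ln_A_le x : 0 <= x -> ln (A x) <= x ^+ 2 / 8 + p * x.
Proof.
move=> x0.
pose f := 8^-1 *: (id * id) - (@ln R \o A) + p *: id.
pose df y := 8^-1 * (y * 1 + y * 1) - (A y)^-1 * (p * expR y) + p * 1.
have fE y : f y = 8^-1 * (y * y) - ln (A y) + p * y by [].
have f0 : f 0 = 0.
  by rewrite fE /A expR0 mulr1 subrK ln1 !mulr0 subrr addr0.
have fdf (y : R) : is_derive y 1 f (df y).
  exact: is_deriveD (is_deriveB (is_deriveZ _ (is_deriveM (@is_derive_id _ _ y 1)
      (@is_derive_id _ _ y 1))) (is_derive1_comp (is_derive1_ln (A_gt0 y)) (is_derive_A y)))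
    (is_deriveZ p (@is_derive_id _ _ y 1)).
suff : f 0 <= f x by rewrite f0 fE expr2; lra.
apply: (ge0_is_derive_le x0 fdf) => y /andP[y0 _].
by have := deriv_ln_A_le y0; rewrite /df !mulr1; lra.
Qed.

Lemma bernoulli_mgf_hoeffding l : 0 <= l -> bernoulli_mgf p l <= expR (l ^+ 2 / 8).
Proof.
move=> l0.
have -> : bernoulli_mgf p l = expR (ln (A l) - l * p).
  rewrite expRD lnK ?posrE // /bernoulli_mgf /A mulrBr mulr1 expRD; ring.
by rewrite ler_expR; have := ln_A_le l0; lra.
Qed.

End hoeffding.

Lemma bernoulli_mgf_chernoff_upper p q : 0 < q ->
  bernoulli_mgf p (ln q) * expR (- (ln q * (p * q - p)))
    <= expR (p * (q - 1) - p * q * ln q).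
Proof.
move=> q0; apply: le_trans (ler_wpM2r (expR_ge0 _) (bernoulli_mgf_chernoff p (ln q))) _.
by rewrite -expRD lnK // ler_expR; lra.
Qed.

Lemma bernoulli_mgf_chernoff_lower p q : 0 < q ->
  bernoulli_mgf (1 - p) (ln q) * expR (- (ln q * (p - p / q)))
    <= expR (p * (q^-1 - 1) + p * q^-1 * ln q).
Proof.
move=> q0; rewrite bernoulli_mgfC.
apply: le_trans (ler_wpM2r (expR_ge0 _) (bernoulli_mgf_chernoff p (- ln q))) _.
by rewrite -expRD expRN lnK // ler_expR; lra.
Qed.

Lemma bernoulli_mgf_hoeffding_tail p t : 0 <= p <= 1 -> 0 <= t ->
  bernoulli_mgf p (4 * t) * expR (- (4 * t * t)) <= expR (- (2 * t ^+ 2)).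
Proof.
move=> p01 t0; have l0 : 0 <= 4 * t by rewrite mulr_ge0.
apply: le_trans (ler_wpM2r (expR_ge0 _) (bernoulli_mgf_hoeffding p01 l0)) _.
by rewrite -expRD ler_expR !expr2; lra.
Qed.

Lemma bernoulli_mgf_bernstein_tail p t : 0 <= p <= 1 -> 0 <= t ->
  exists2 l, 0 <= l & bernoulli_mgf p l * expR (- (l * t))
    <= expR (- t ^+ 2 / (2 * sigma2 p + 2 * t / 3)).
Proof.
move=> p01 t0; have /andP[p0 p1] := p01.
have V0 : 0 <= sigma2 p by rewrite mulr_ge0 ?subr_ge0.
have [V_eq0|V_neq0] := eqVneq (sigma2 p) 0.
  (* p is 0 or 1, so the mgf is identically 1 and l = 3/2 gives exp(-3t/2). *)
  have mgf1 l : bernoulli_mgf p l = 1.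
    move/eqP: V_eq0; rewrite /sigma2 mulf_eq0 subr_eq0 /bernoulli_mgf.
    by case/orP=> [/eqP->|/eqP<-];
      rewrite ?subr0 ?subrr !(mul0r, mulr0, oppr0) expR0 ?addr0 ?add0r ?mulr1.
  exists (3 / 2); first by rewrite divr_ge0.
  rewrite mgf1 mul1r V_eq0 mulr0 add0r ler_expR.
  have [->|t_neq0] := eqVneq t 0; first by rewrite !(mulr0, mul0r) expr0n /= oppr0 mul0r.
  by rewrite le_eqVlt; apply/orP; left; apply/eqP; field.
have V_gt0 : 0 < sigma2 p by rewrite lt_def V_neq0.
set V := sigma2 p in V0 V_gt0 V_neq0 *.
have D_gt0 : 0 < V + t / 3 by rewrite ltr_wpDr ?divr_ge0.
exists (t / (V + t / 3)); first by rewrite divr_ge0 // ltW.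
have l3 : 0 <= t / (V + t / 3) < 3.
  apply/andP; split; first by rewrite divr_ge0 // ltW.
  by rewrite ltr_pdivrMr //; lra.
apply: le_trans (ler_wpM2r (expR_ge0 _) (bernoulli_mgf_bernstein p01 l3)) _.
rewrite -expRD ler_expR le_eqVlt; apply/orP; left; apply/eqP.
by rewrite -/V; field; apply/and3P; split; rewrite gt_eqF //; lra.
Qed.

End bernoulli_mgf.

Lemma natr_card_set (R : pzSemiRingType) (I : finType) (a : pred I) :
  #|[set i | a i]|%:R = \sum_i (a i)%:R :> R.
Proof.
rewrite -sum1_card natr_sum big_mkcond /=; apply: eq_bigr => i _.
by rewrite inE; case: (a i).
Qed.

Section sampling.
Variables (R : realType) (n k : nat).
Local Notation sample := {ffun 'I_k -> 'I_n}.
Implicit Types (E : pred sample) (b : pred 'I_n) (p l : R).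

Lemma sample_prob_le E E' : (forall s, E s -> E' s) ->
  sample_prob R E <= sample_prob R E'.
Proof.
move=> EE'; rewrite /sample_prob ler_wpM2r ?invr_ge0 // ler_nat.
by apply: subset_leq_card; apply/fintype.subsetP => s; rewrite !inE; exact: EE'.
Qed.

Lemma sample_prob_cover E E1 E2 : (0 < n)%N ->
  (forall s, [|| E s, E1 s | E2 s]) ->
  1 - sample_prob R E1 - sample_prob R E2 <= sample_prob R E.
Proof.
move=> n0 cover.
have card_le : (n ^ k <= #|[set s | E s]| + #|[set s | E1 s]| + #|[set s | E2 s]|)%N.
  rewrite -{1}(card_ord n) -{1}(card_ord k) -card_ffun -cardsT.
  have : [set: sample] \subset [set s | E s] :|: [set s | E1 s] :|: [set s | E2 s].
    by apply/fintype.subsetP => s _; rewrite !inE -orbA cover.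
  move/subset_leq_card/leq_trans; apply.
  by rewrite (leq_trans (leq_card_setU _ _)) // leq_add2r leq_card_setU.
have nk_gt0 : (0 : R) < (n ^ k)%:R by rewrite ltr0n expn_gt0 n0.
rewrite /sample_prob -(ler_pM2r nk_gt0) !mulrBl !mulfVK ?gt_eqF // mul1r.
by rewrite lerBlDr lerBlDr -!natrD ler_nat addnAC.
Qed.

Lemma sample_prob_sum_ge (w : 'I_n -> R) c :
  sample_prob R (fun s : sample => c <= \sum_i w (s i))
    <= ((\sum_j expR (w j)) / n%:R) ^+ k * expR (- c).
Proof.
rewrite /sample_prob natrX expr_div_n mulrAC ler_wpM2r ?invr_ge0 ?exprn_ge0 //.
rewrite expRN ler_pdivlMr ?expR_gt0 //.
have -> : (\sum_j expR (w j)) ^+ k = \sum_(s : sample) \prod_i expR (w (s i)).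
  by rewrite -(bigA_distr_bigA (fun _ j => expR (w j))) prodr_const card_ord.
set S := [set s | _]; rewrite mulr_natl -sumr_const [leRHS](bigID (mem S)) /=.
rewrite ler_wpDr ?sumr_ge0 //.
  by move=> s _; rewrite prodr_ge0 // => i _; rewrite expR_ge0.
by apply: ler_sum => s; rewrite inE -expR_sum ler_expR.
Qed.

Lemma sum_expR_centered_indicator b p l : #|[set j | b j]|%:R = p * n%:R ->
  \sum_j expR (l * ((b j)%:R - p)) = n%:R * bernoulli_mgf p l.
Proof.
move=> cardb; pose e0 := expR (- (l * p)); pose e1 := expR (l * (1 - p)).
rewrite (eq_bigr (fun j => e0 + (b j)%:R * (e1 - e0))); last first.
  move=> j _; case: (b j) => /=.
    by rewrite mul1r addrCA subrr addr0.
  by rewrite mul0r addr0 sub0r mulrN.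
rewrite big_split sumr_const card_ord -mulr_suml -natr_card_set cardb.
by rewrite /bernoulli_mgf -/e0 -/e1 -[e0 *+ n]mulr_natl /=; ring.
Qed.

Lemma sample_prob_upper_tail b p d l B : (0 < n)%N -> 0 <= p <= 1 ->
  #|[set j | b j]|%:R = p * n%:R -> 0 <= l ->
  bernoulli_mgf p l * expR (- (l * d)) <= expR B ->
  sample_prob R (fun s : sample => k%:R * d <= \sum_i ((b (s i))%:R - p))
    <= expR (k%:R * B).
Proof.
move=> n0 p01 cardb l0 mgf_le.
have scale_tail (s : sample) : k%:R * d <= \sum_i ((b (s i))%:R - p) ->
    l * (k%:R * d) <= \sum_i l * ((b (s i))%:R - p).
  by move=> tail; rewrite -mulr_sumr ler_wpM2l.
apply: le_trans (sample_prob_le scale_tail) _.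
apply: le_trans (@sample_prob_sum_ge (fun j => l * ((b j)%:R - p)) _) _.
rewrite sum_expR_centered_indicator // mulrAC divff ?mul1r ?pnatr_eq0 -?lt0n //.
rewrite mulrCA -mulrN !expRM_natl -exprMn.
by rewrite lerXn2r ?nnegrE ?mulr_ge0 ?expR_ge0 ?bernoulli_mgf_ge0.
Qed.

Lemma sample_prob_lower_tail b p d l B : (0 < n)%N -> 0 <= p <= 1 ->
  #|[set j | b j]|%:R = p * n%:R -> 0 <= l ->
  bernoulli_mgf (1 - p) l * expR (- (l * d)) <= expR B ->
  sample_prob R (fun s : sample => k%:R * d <= \sum_i (p - (b (s i))%:R))
    <= expR (k%:R * B).
Proof.
move=> n0 /andP[p0 p1] cardb l0 mgf_le.
have cardbC : #|[set j | ~~ b j]|%:R = (1 - p) * n%:R :> R.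
  have -> : [set j | ~~ b j] = ~: [set j | b j] by apply/setP => j; rewrite !inE.
  apply/eqP; rewrite mulrBl mul1r -cardb eq_sym subr_eq addrC -natrD.
  by rewrite cardsC card_ord.
have p01' : 0 <= 1 - p <= 1 by apply/andP; split; lra.
apply: le_trans (sample_prob_upper_tail n0 p01' cardbC l0 mgf_le).
have sumE (s : sample) :
    \sum_i (p - (b (s i))%:R) = \sum_i ((~~ b (s i))%:R - (1 - p)).
  by apply: eq_bigr => i _; case: (b (s i)) => /=; lra.
by apply: sample_prob_le => s; rewrite sumE.
Qed.

End sampling.

Section qerror.
Variable R : realType.

Lemma qerror_gt (est tru q : R) : 1 <= tru -> 1 <= q -> q < qerror est tru ->
  q * tru < est \/ q * est < tru.
Proof.
move=> tru1 q1; have est_le : est <= Num.max est 1 by rewrite le_max lexx.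
have est'_ge1 : 1 <= Num.max est 1 by rewrite le_max lexx orbT.
rewrite /qerror (max_idPl tru1) lt_max => /orP[|].
  rewrite ltr_pdivlMr ?(lt_le_trans ltr01) // => q_lt; right.
  by apply: le_lt_trans q_lt; rewrite ler_wpM2l // (le_trans ler01).
rewrite ltr_pdivlMr ?(lt_le_trans ltr01) // => q_lt; left.
have /max_idPl est'E : 1 <= est.
  rewrite leNgt; apply/negP => /ltW/max_idPr est'E.
  by move: q_lt; rewrite est'E ltNge mulr_ege1.
by rewrite -est'E.
Qed.

Lemma qerror_gt_tails (N K X p q : R) : 0 < N -> 0 < K -> 1 <= p * N -> 1 <= q ->
  q < qerror (N / K * X) (p * N) ->
  K * (p * q - p) <= X - K * p \/ K * (p - p / q) <= K * p - X.
Proof.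
move=> N0 K0 tru1 q1 /(qerror_gt tru1 q1) q_lt.
have NK_gt0 : 0 < N / K by rewrite divr_gt0.
have q0 : 0 < q by lra.
case: q_lt => q_lt; [left | right].
  have : q * p * K < X.
    rewrite -(ltr_pM2l NK_gt0) (_ : N / K * (q * p * K) = q * (p * N)) //.
    by field; rewrite gt_eqF.
  lra.
have : X * q <= K * p.
  rewrite -(ler_pM2l NK_gt0) (_ : N / K * (K * p) = p * N); last first.
    by field; rewrite gt_eqF.
  by rewrite mulrA mulrC ltW.
rewrite -ler_pdivlMr // -mulrA; lra.
Qed.

End qerror.

Section tail_bounds.
Variables (R : realType) (n k : nat) (b : pred 'I_n) (p q : R).
Hypotheses (n_gt0 : (0 < n)%N) (p01 : 0 <= p <= 1)
  (card_b : #|[set j | b j]|%:R = p * n%:R) (q_ge1 : 1 <= q).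
Local Notation sample := {ffun 'I_k -> 'I_n}.

Let q_gt0 : 0 < q. Proof. by apply: lt_le_trans q_ge1. Qed.

Lemma sample_prob_upper_tail_le_Omega :
  sample_prob R (fun s : sample => k%:R * (p * q - p) <= \sum_i ((b (s i))%:R - p))
    <= Omega p q k.
Proof.
have d_ge0 : 0 <= p * q - p.
  by rewrite -[X in _ - X]mulr1 -mulrBr mulr_ge0 ?subr_ge0 //; case/andP: p01.
rewrite /Omega !le_min; apply/and3P; split.
- apply: le_trans (sample_prob_upper_tail k n_gt0 p01 card_b (ln_ge0 q_ge1)
    (bernoulli_mgf_chernoff_upper p q_gt0)) _.
  by rewrite -[X in X `^ q](lnK q_gt0) -expRM -expRB -expRM ler_expR; lra.
- have [l l_ge0 mgf_le] := bernoulli_mgf_bernstein_tail p01 d_ge0.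
  apply: le_trans (sample_prob_upper_tail k n_gt0 p01 card_b l_ge0 mgf_le) _.
  by rewrite mulrA mulrN.
- have l_ge0 : 0 <= 4 * (p * q - p) by rewrite mulr_ge0.
  apply: le_trans (sample_prob_upper_tail k n_gt0 p01 card_b l_ge0
    (bernoulli_mgf_hoeffding_tail p01 d_ge0)) _.
  by rewrite ler_expR; lra.
Qed.

Lemma sample_prob_lower_tail_le_Psi :
  sample_prob R (fun s : sample => k%:R * (p - p / q) <= \sum_i (p - (b (s i))%:R))
    <= Psi p q k.
Proof.
have /andP[p_ge0 p_le1] := p01.
have pq_le : p / q <= p by rewrite ler_pdivrMr // ler_peMr.
have d_ge0 : 0 <= p - p / q by rewrite subr_ge0.
have p01' : 0 <= 1 - p <= 1 by apply/andP; split; lra.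
set lower_tail := fun s : sample => k%:R * (p - p / q) <= \sum_i (p - (b (s i))%:R).
have chernoff : sample_prob R lower_tail
    <= (expR (q^-1 - 1) * q `^ (q^-1)) `^ (p * k%:R).
  apply: le_trans (sample_prob_lower_tail k n_gt0 p01 card_b (ln_ge0 q_ge1)
    (bernoulli_mgf_chernoff_lower p q_gt0)) _.
  by rewrite -[X in X `^ q^-1](lnK q_gt0) -expRM -expRD -expRM ler_expR; lra.
have bernstein : sample_prob R lower_tail
    <= expR (- (k%:R * (p - p / q) ^+ 2) / (2 * sigma2 p + 2 * (p - p / q) / 3)).
  have [l l_ge0 mgf_le] := bernoulli_mgf_bernstein_tail p01' d_ge0.
  apply: le_trans (sample_prob_lower_tail k n_gt0 p01 card_b l_ge0 mgf_le) _.
  have -> : sigma2 (1 - p) = sigma2 p by rewrite /sigma2; ring.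
  by rewrite mulrA mulrN.
rewrite /Psi /=; case: ifP => pq_gt1; rewrite !le_min chernoff bernstein //=.
have l_ge0 : 0 <= 4 * (p - p / q) by rewrite mulr_ge0.
apply: le_trans (sample_prob_lower_tail k n_gt0 p01 card_b l_ge0
  (bernoulli_mgf_hoeffding_tail p01' d_ge0)) _.
rewrite ler_expR (_ : - (2 * k%:R * (p * q - 1) ^+ 2) / q ^+ 2
  = k%:R * - (2 * ((p * q - 1) / q) ^+ 2)); last by field; rewrite gt_eqF.
have pq1_ge0 : 0 <= (p * q - 1) / q by rewrite divr_ge0 ?subr_ge0 ?ltW.
rewrite ler_wpM2l // lerN2 ler_wpM2l // lerXn2r ?nnegrE //.
by rewrite mulrBl mulfK ?gt_eqF // mul1r lerB // ler_piMl // invr_ge0 ltW.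
Qed.

End tail_bounds.

Lemma qerror_estimate_tails (R : realType) (T : Type) (n k : nat) (t : 'I_n -> T)
    (P : pred T) (p q : R) (s : {ffun 'I_k -> 'I_n}) :
  (0 < n)%N -> (0 < k)%N -> 1 <= p * n%:R -> 1 <= q ->
  [|| qerror (estimate R t P s) (p * n%:R) <= q,
      k%:R * (p * q - p) <= \sum_i ((P (t (s i)))%:R - p)
    | k%:R * (p - p / q) <= \sum_i (p - (P (t (s i)))%:R)].
Proof.
move=> n_gt0 k_gt0 tru_ge1 q_ge1.
have [//|q_lt] := leP (qerror (estimate R t P s) (p * n%:R)) q.
have Xhat_sum : (Xhat t P s)%:R = \sum_i ((P (t (s i)))%:R : R) by exact: natr_card_set.
rewrite /estimate Xhat_sum in q_lt.
have N_gt0 : (0 : R) < n%:R by rewrite ltr0n.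
have K_gt0 : (0 : R) < k%:R by rewrite ltr0n.
have [] := qerror_gt_tails N_gt0 K_gt0 tru_ge1 q_ge1 q_lt;
  by rewrite !sumrB sumr_const card_ord -[p *+ k]mulr_natl => ->; rewrite ?orbT.
Qed.

Theorem theorem3 (R : realType) (T : Type) (n : nat) (t : 'I_n -> T)
  (P : pred T) (p : R) (k : nat) (q : R) :
  (0 < n)%N ->
  0 < p -> p <= 1 ->
  #|[set i : 'I_n | P (t i)]|%:R = p * n%:R ->
  (1 <= k)%N ->
  1 <= q ->
  1 - Omega p q k - Psi p q k <=
  sample_prob R (fun s : {ffun 'I_k -> 'I_n} => qerror (estimate R t P s) (p * n%:R) <= q).
Proof.
move=> n_gt0 p_gt0 p_le1 card_P k_gt0 q_ge1.
have p01 : 0 <= p <= 1 by rewrite ltW.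
have tru_ge1 : 1 <= p * n%:R.
  have : (0 : R) < #|[set i | P (t i)]|%:R by rewrite card_P mulr_gt0 ?ltr0n.
  by rewrite -card_P ltr0n ler1n.
have := sample_prob_upper_tail_le_Omega k n_gt0 p01 card_P q_ge1.
have := sample_prob_lower_tail_le_Psi k n_gt0 p01 card_P q_ge1.
have := sample_prob_cover R n_gt0
  (fun s => qerror_estimate_tails t P s n_gt0 k_gt0 tru_ge1 q_ge1).
lra.
Qed.
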